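(* Let $N\ge 2$ and let $\mathcal{H}$ be the class of $N$-layer feedforward networks $h=\varphi_N\circ\cdots\circ\varphi_1:\mathcal{X}\to\mathcal{Y}$ with $\varphi_k\in\Phi_k$. For $i\in\{1,\dots,N-1\}$ let $\mathcal{G}_i=\{\varphi_i\circ\cdots\circ\varphi_1:\varphi_k\in\Phi_k\}$ and $\mathcal{F}_i=\{\varphi_N\circ\cdots\circ\varphi_{i+1}:\varphi_k\in\Phi_k\}$, so $\mathcal{H}=\mathcal{F}_i\mathcal{G}_i$. For $h=\varphi_N\circ\cdots\circ\varphi_1\in\mathcal{H}$ write $g_i=\varphi_i\circ\cdots\circ\varphi_1$. Then $$R_T(h)\le R_S(h)+\min_{1\le i<N}\Big\{d_{\mathcal{F}_i\Delta\mathcal{F}_i}\big(p_S^{g_i}(Z),p_T^{g_i}(Z)\big)+d_{{\mathcal{F}_i}_{\mathcal{G}_i\Delta\mathcal{G}_i}}(p_S,p_T)+\lambda_{\mathcal{F}_i\mathcal{G}_i}(g_i)\Big\},$$ where $\lambda_{\mathcal{F}_i\mathcal{G}_i}(g_i)=\inf_{f'\in\mathcal{F}_i,\,g'\in\mathcal{G}_i}\big[2R_S(f'g_i)+R_S(f'g')+R_T(f'g')\big]$.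
   Context: $\mathcal{X}\subseteq\mathbb{R}^n$, $\mathcal{Y}=\{0,1\}$; $\Phi_k$ is a class of maps from the $(k-1)$-th layer space to the $k$-th layer space (layer $0$ space is $\mathcal{X}$, layer $N$ space is $\mathcal{Y}$). $p_S,p_T$ are probability distributions on $\mathcal{X}\times\mathcal{Y}$. Composition is written by juxtaposition. Loss is zero-one $\ell(a,b)=\mathbf{1}[a\ne b]$; for $D\in\{S,T\}$, $R_D(h)=\mathbb{E}_{(x,y)\sim p_D}[\ell(h(x),y)]$ and $R_D(h,h')=\mathbb{E}_{x\sim p_D}[\ell(h(x),h'(x))]$ ($x$ from the $\mathcal{X}$-marginal of $p_D$). $p_D^{g}(Z)$ is the distribution of $g(X)$ for $X$ from the $\mathcal{X}$-marginal of $p_D$. For a predictor class $\mathcal{F}$ and embedding $g$: $d_{\mathcal{F}\Delta\mathcal{F}}(p_S^g(Z),p_T^g(Z))=\sup_{f_1,f_2\in\mathcal{F}}|R_S(f_1g,f_2g)-R_T(f_1g,f_2g)|$. For classes $\mathcal{F},\mathcal{G}$: $d_{\mathcal{F}_{\mathcal{G}\Delta\mathcal{G}}}(p_S,p_T)=\sup_{f\in\mathcal{F};\,g_1,g_2\in\mathcal{G}}|R_S(fg_1,fg_2)-R_T(fg_1,fg_2)|$. *)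

From HB Require Import structures.
From mathcomp Require Import all_boot all_order all_algebra.
From mathcomp Require Import all_classical all_reals all_analysis.
Set Implicit Arguments. Unset Strict Implicit. Unset Printing Implicit Defensive.
Import Order.TTheory GRing.Theory Num.Theory.
Local Open Scope classical_set_scope.
Local Open Scope ring_scope.
Local Open Scope ereal_scope.

Section Risks.
Context {R : realType} {dX : measure_display} {X : measurableType dX}.

Definition risk (P : probability (X * bool)%type R) (h : X -> bool) : \bar R :=
  P [set xy | h xy.1 != xy.2].

Definition risk2 (P : probability (X * bool)%type R) (h h' : X -> bool) : \bar R :=
  P [set xy | h xy.1 != h' xy.1].

Definition dFF {U : Type} (PS PT : probability (X * bool)%type R)
  (F : set (U -> bool)) (g : X -> U) : \bar R :=
  ereal_sup [set v | exists f1 f2, F f1 /\ F f2 /\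
     v = `| risk2 PS (f1 \o g) (f2 \o g) - risk2 PT (f1 \o g) (f2 \o g) |].

Definition dFGG {U : Type} (PS PT : probability (X * bool)%type R)
  (F : set (U -> bool)) (G : set (X -> U)) : \bar R :=
  ereal_sup [set v | exists f g1 g2, F f /\ G g1 /\ G g2 /\
     v = `| risk2 PS (f \o g1) (f \o g2) - risk2 PT (f \o g1) (f \o g2) |].

Definition lambdaFG {U : Type} (PS PT : probability (X * bool)%type R)
  (F : set (U -> bool)) (G : set (X -> U)) (g : X -> U) : \bar R :=
  ereal_inf [set v | exists f' g', F f' /\ G g' /\
     v = 2%:E * risk PS (f' \o g) + risk PS (f' \o g') + risk PT (f' \o g')].

End Risks.

(* Layer spaces Z 0 (= input space X), Z 1, ..., Z M
   (M = N-1 hidden layers), output space bool.  Phi k is the class of maps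
   Z k -> Z k.+1 (the paper's Phi_{k+1}), for k < M; Phiout is the class of
   maps Z M -> bool (the paper's Phi_N). *)
Section Layers.
Context (Z : nat -> Type) (Phi : forall k, set (Z k -> Z k.+1)).

Fixpoint netcomp (phi : forall k, Z k -> Z k.+1) (i : nat) : Z 0 -> Z i :=
  match i return Z 0 -> Z i with
  | 0 => id
  | j.+1 => phi j \o netcomp phi j
  end.

Fixpoint Gcls (i : nat) : set (Z 0 -> Z i) :=
  match i return set (Z 0 -> Z i) with
  | 0 => [set id]
  | j.+1 => [set f | exists p g, @Phi j p /\ @Gcls j g /\ f = p \o g]
  end.

Context (M : nat) (Phiout : set (Z M -> bool)).

(* Fcls i = { fo o phi_{M-1} o ... o phi_i : phi_k in Phi k, fo in Phiout }
   (the paper's F_i), for i <= M *)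
Inductive Fcls : forall i, (Z i -> bool) -> Prop :=
  | Fcls_out fo : Phiout fo -> Fcls fo
  | Fcls_cons i p f : @Phi i p -> @Fcls i.+1 f -> @Fcls i (f \o p).

End Layers.

Arguments Gcls {Z} Phi i.
Arguments Fcls {Z} Phi M Phiout i _.
Arguments netcomp {Z} phi i.

(* For one split h = f g of the network into an embedding g and a head f,
   and any competitor f' g', move the target error of h to the source in three
   hops: R_T(f g) <= R_T(f' g') + R_T(f g, f' g) + R_T(f' g, f' g').  The middle
   disagreement compares two heads on the same embedding g, so it moves to the
   source at cost d_{F Delta F}; the last one compares two embeddings under the
   same head f', so it moves at cost d_{F_{G Delta G}}.  Bounding the source
   disagreements by sums of source errors and optimising over (f', g') gives
   the bound for each split, hence for their minimum. *)

From mathcomp Require Import all_boot all_order all_algebra.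
From mathcomp Require Import all_classical all_reals all_analysis.
Import Order.TTheory GRing.Theory Num.Theory.
Local Open Scope classical_set_scope.
Local Open Scope ring_scope.
Local Open Scope ereal_scope.

Lemma measurable_neqb d (T : measurableType d) (a b : T -> bool) :
  measurable_fun setT a -> measurable_fun setT b -> measurable [set x | a x != b x].
Proof.
move=> ma mb.
have -> : [set x | a x != b x] = a @^-1` [set true] `&` b @^-1` [set false]
    `|` a @^-1` [set false] `&` b @^-1` [set true].
  by apply/seteqP; split=> x /=; case: (a x); case: (b x); firstorder.
by apply: measurableU; apply: measurableI; rewrite -[X in measurable X]setTI;
  [apply: ma | apply: mb | apply: ma | apply: mb].
Qed.

Lemma le_measureU2 d (T : ringOfSetsType d) (R : realFieldType)
    (mu : {content set T -> \bar R}) (A B C : set T) :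
  measurable A -> measurable B -> measurable C -> A `<=` B `|` C ->
  mu A <= mu B + mu C.
Proof.
move=> mA mB mC sABC; apply: le_trans (measureU2 mu mB mC).
by apply: le_measure => //; rewrite inE //; apply: measurableU.
Qed.

Section Risks.
Context {R : realType} {d : measure_display} {X : measurableType d}.
Implicit Types (P : probability (X * bool)%type R) (h : X -> bool).

Lemma measurable_risk_set h :
  measurable_fun setT h -> measurable [set xy : X * bool | h xy.1 != xy.2].
Proof.
move=> mh; apply: (@measurable_neqb _ _ (h \o fst) snd) => //.
exact: measurableT_comp mh measurable_fst.
Qed.

Lemma measurable_risk2_set h h' : measurable_fun setT h -> measurable_fun setT h' ->
  measurable [set xy : X * bool | h xy.1 != h' xy.1].
Proof.
move=> mh mh'; apply: (@measurable_neqb _ _ (h \o fst) (h' \o fst));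
  exact: measurableT_comp measurable_fst.
Qed.

Lemma risk2_fin_num P h h' : measurable_fun setT h -> measurable_fun setT h' ->
  risk2 P h h' \is a fin_num.
Proof. by move=> mh mh'; apply: fin_num_measure; apply: measurable_risk2_set. Qed.

Section Triangle.
Context (P : probability (X * bool)%type R) {h1 h2 h3 : X -> bool}.
Hypotheses (mh1 : measurable_fun setT h1) (mh2 : measurable_fun setT h2)
  (mh3 : measurable_fun setT h3).

Lemma risk_le_risk2 : risk P h1 <= risk P h2 + risk2 P h1 h2.
Proof.
apply: le_measureU2; [exact: measurable_risk_set.. | exact: measurable_risk2_set |].
by move=> xy /=; case: (h1 xy.1); case: (h2 xy.1); case: xy.2; auto.
Qed.

Lemma risk2_triangle : risk2 P h1 h3 <= risk2 P h1 h2 + risk2 P h2 h3.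
Proof.
apply: le_measureU2; [exact: measurable_risk2_set.. |].
by move=> xy /=; case: (h1 xy.1); case: (h2 xy.1); case: (h3 xy.1); auto.
Qed.

Lemma risk2_le_risk : risk2 P h1 h2 <= risk P h1 + risk P h2.
Proof.
apply: le_measureU2; [exact: measurable_risk2_set | exact: measurable_risk_set.. |].
by move=> xy /=; case: (h1 xy.1); case: (h2 xy.1); case: xy.2; auto.
Qed.

End Triangle.
End Risks.

Section ExtendedRealBounds.
Context {R : realType}.
Implicit Types (a b c : \bar R) (S : set (\bar R)).

Lemma lee_addl_absB a b : a \is a fin_num -> b \is a fin_num -> a <= b + `|b - a|.
Proof.
move=> fa fb; rewrite -leeBlDl // -abseN oppeB ?fin_num_adde_defl ?fin_numN //.
by rewrite addeC lee_abs.
Qed.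

Lemma lee_adde_ereal_inf c a S : 0 <= a -> (forall v, S v -> 0 <= v) ->
  (forall v, S v -> c <= a + v) -> c <= a + ereal_inf S.
Proof.
move=> a0 S0 caS; have infS0 : 0 <= ereal_inf S by apply/ereal_infP.
case: a a0 caS => [a _ caS | _ _ |//]; last first.
  by rewrite addye ?leey // -ltNye (lt_le_trans ltNy0 infS0).
by rewrite -leeBlDl //; apply/ereal_infP => v /caS; rewrite leeBlDl.
Qed.

Lemma lee_adde_bigmin (I : Type) (r : seq I) (P : pred I) (F : I -> \bar R) c a :
  a != -oo -> (forall i, P i -> c <= a + F i) ->
  c <= a + \big[Order.min/+oo]_(i <- r | P i) F i.
Proof.
move=> aNy caF; apply: (big_ind (fun v => c <= a + v)) => //.
  by rewrite addey ?leey.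
by move=> x y cx cy; rewrite /Order.min; case: ifP.
Qed.

End ExtendedRealBounds.

Section DomainAdaptation.
Context {R : realType} {d : measure_display} {X : measurableType d}.
Context (PS PT : probability (X * bool)%type R).

Lemma risk_target_le (h h1 h2 : X -> bool) (d1 d2 : \bar R) :
  measurable_fun setT h -> measurable_fun setT h1 -> measurable_fun setT h2 ->
  `|risk2 PS h h1 - risk2 PT h h1| <= d1 ->
  `|risk2 PS h1 h2 - risk2 PT h1 h2| <= d2 ->
  risk PT h <= risk PS h + (d1 + d2 + (2%:E * risk PS h1 + risk PS h2 + risk PT h2)).
Proof.
move=> mh mh1 mh2 hd1 hd2.
have to_source (h' h'' : X -> bool) (e : \bar R) :
    measurable_fun setT h' -> measurable_fun setT h'' ->
    `|risk2 PS h' h'' - risk2 PT h' h''| <= e ->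
    risk2 PT h' h'' <= risk PS h' + risk PS h'' + e.
  move=> mh' mh'' he; have fT := risk2_fin_num PT _ _ mh' mh''.
  apply: le_trans (lee_addl_absB _ _ fT (risk2_fin_num PS _ _ mh' mh'')) _.
  by apply: leeD => //; exact: risk2_le_risk.
apply: le_trans (risk_le_risk2 PT mh mh2) _.
apply: le_trans (leeD2l _ (risk2_triangle PT mh mh1 mh2)) _.
have := leeD (to_source _ _ _ mh mh1 hd1) (to_source _ _ _ mh1 mh2 hd2).
move=> /(leeD2l (risk PT h2)) /le_trans; apply.
by rewrite mule_natl mule2n !addeA (ACl (2*4*7*3*5*6*1)).
Qed.

Lemma risk_split_bound (dV : measure_display) (V : measurableType dV)
    (F : set (V -> bool)) (G : set (X -> V)) (f : V -> bool) (g : X -> V) :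
  (forall f, F f -> measurable_fun setT f) -> (forall g, G g -> measurable_fun setT g) ->
  F f -> G g ->
  risk PT (f \o g) <= risk PS (f \o g) +
    (dFF PS PT F g + dFGG PS PT F G + lambdaFG PS PT F G g).
Proof.
move=> FM GM Ff Gg.
have mFG f0 g0 : F f0 -> G g0 -> measurable_fun setT (f0 \o g0).
  by move=> /FM ? /GM ?; exact: measurableT_comp.
have dFF_ge f1 f2 : F f1 -> F f2 ->
    `|risk2 PS (f1 \o g) (f2 \o g) - risk2 PT (f1 \o g) (f2 \o g)| <= dFF PS PT F g.
  by move=> F1 F2; apply: ereal_sup_ubound; exists f1, f2.
have dFGG_ge f0 g1 g2 : F f0 -> G g1 -> G g2 ->
    `|risk2 PS (f0 \o g1) (f0 \o g2) - risk2 PT (f0 \o g1) (f0 \o g2)| <= dFGG PS PT F G.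
  by move=> F0 G1 G2; apply: ereal_sup_ubound; exists f0, g1, g2.
rewrite addeA; apply: lee_adde_ereal_inf.
- rewrite !adde_ge0 ?measure_ge0 //.
    exact: le_trans (abse_ge0 _) (dFF_ge _ _ Ff Ff).
  exact: le_trans (abse_ge0 _) (dFGG_ge _ _ _ Ff Gg Gg).
- by move=> _ [f' [g' [_ [_ ->]]]]; rewrite !adde_ge0 ?mule_ge0 ?measure_ge0.
- move=> _ [f' [g' [Ff' [Gg' ->]]]]; rewrite -addeA.
  by apply: risk_target_le; [exact: mFG.. | exact: dFF_ge | exact: dFGG_ge].
Qed.

End DomainAdaptation.

Section Layers.
Context {Z : nat -> Type} {Phi : forall k, set (Z k -> Z k.+1)}.

Lemma Gcls_netcomp (phi : forall k, Z k -> Z k.+1) i :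
  (forall k, (k < i)%N -> Phi k (phi k)) -> Gcls Phi i (netcomp phi i).
Proof.
elim: i => [//|i IH] hphi; exists (phi i), (netcomp phi i); split; first exact: hphi.
by split=> //; apply: IH => k /ltnW; exact: hphi.
Qed.

Context {M : nat} {Phiout : set (Z M -> bool)}.

Lemma Fcls_le {i f} : Fcls Phi M Phiout i f -> (i <= M)%N.
Proof. by elim=> // j p g _ _ /ltnW. Qed.

Lemma Fcls_netcomp {phi : forall k, Z k -> Z k.+1} {fo : Z M -> bool} {i : nat} :
  (forall k, (k < M)%N -> Phi k (phi k)) -> Phiout fo -> (i <= M)%N ->
  exists2 f, Fcls Phi M Phiout i f & fo \o netcomp phi M = f \o netcomp phi i.
Proof.
move=> hphi hfo /subnK; move: (M - i)%N => n; elim: n i => [|n IH] i.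
  by rewrite add0n => ->; exists fo => //; exact: Fcls_out.
rewrite addSnnS => /IH [f Ff ->]; exists (f \o phi i) => //.
exact: Fcls_cons (hphi _ (Fcls_le Ff)) Ff.
Qed.

End Layers.

Section MeasurableLayers.
Context {dZ : nat -> measure_display} {Z : forall k, measurableType (dZ k)}
  {Phi : forall k, set (Z k -> Z k.+1)}.

Lemma Gcls_measurable i g :
  (forall k p, (k < i)%N -> Phi k p -> measurable_fun setT p) ->
  Gcls Phi i g -> measurable_fun setT g.
Proof.
elim: i g => [g _ -> //|i IH g PhiM [p [g' [Pp [Gg' ->]]]]].
apply: measurableT_comp; first exact: PhiM Pp.
by apply: IH Gg' => k q /ltnW; exact: PhiM.
Qed.

Context {M : nat} {Phiout : set (Z M -> bool)}.
Hypotheses (PhiM : forall k p, (k < M)%N -> Phi k p -> measurable_fun setT p)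
  (PhioutM : forall fo, Phiout fo -> measurable_fun setT fo).

Lemma Fcls_measurable i f : Fcls Phi M Phiout i f -> measurable_fun setT f.
Proof.
elim=> [fo /PhioutM // | j p g Pp Fg mg].
by apply: measurableT_comp mg _; exact: PhiM (Fcls_le Fg) Pp.
Qed.

End MeasurableLayers.

Theorem corollary6 (R : realType) (N : nat) (hN : (2 <= N)%N)
  (dZ : nat -> measure_display) (Z : forall k, measurableType (dZ k))
  (Phi : forall k, set (Z k -> Z k.+1)) (Phiout : set (Z N.-1 -> bool))
  (PhiM : forall k p, (k < N.-1)%N -> Phi k p -> measurable_fun setT p)
  (PhioutM : forall fo, Phiout fo -> measurable_fun setT fo)
  (PS PT : probability (Z 0%N * bool)%type R)
  (phi : forall k, Z k -> Z k.+1) (fo : Z N.-1 -> bool)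
  (hphi : forall k, (k < N.-1)%N -> Phi k (phi k)) (hfo : Phiout fo) :
  risk PT (fo \o @netcomp (fun k => Z k) phi N.-1) <=
  risk PS (fo \o @netcomp (fun k => Z k) phi N.-1) +
  \big[Order.min/+oo]_(1 <= i < N)
     (dFF PS PT (@Fcls (fun k => Z k) Phi N.-1 Phiout i) (@netcomp (fun k => Z k) phi i)
      + dFGG PS PT (@Fcls (fun k => Z k) Phi N.-1 Phiout i) (@Gcls (fun k => Z k) Phi i)
      + lambdaFG PS PT (@Fcls (fun k => Z k) Phi N.-1 Phiout i) (@Gcls (fun k => Z k) Phi i) (@netcomp (fun k => Z k) phi i)).
Proof.
rewrite big_nat_cond; apply: lee_adde_bigmin => [|i /andP[/andP[_ iN] _]].
  by rewrite -ltNye (lt_le_trans ltNy0) ?measure_ge0.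
have iM : (i <= N.-1)%N by rewrite -ltnS prednK // (leq_trans _ hN).
have [f Ff ->] := Fcls_netcomp hphi hfo iM.
apply: risk_split_bound => //.
- by move=> f'; exact: Fcls_measurable.
- by move=> g; apply: Gcls_measurable => k p ki; apply: PhiM; exact: leq_trans ki iM.
- by apply: Gcls_netcomp => k ki; apply: hphi; exact: leq_trans ki iM.
Qed.
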